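(* Let $A$ be a minimal $A_\infty$-algebra over a field supported in non-positive degrees, and let $P$ be a minimal $A_\infty$-module over $A$. Then the ascending degree filtration $P^{(l)}=\bigoplus_{k\le l}P^k$ is a filtration by $A_\infty$-submodules, and the subquotients, which are supported in a single degree, are determined up to $A_\infty$-equivalence by the corresponding representation of $A^0$.
   Context: An $A_\infty$-algebra is minimal if $\mu^1=0$; a module with structure maps $\mu^{1|d}:P\otimes A^{\otimes d}\to P$ of degree $1-d$ is minimal if $\mu^{1|0}=0$. $A^0$ is an ordinary associative algebra under $\mu^2$, and a subquotient concentrated in one degree is an ordinary $A^0$-module via $\mu^{1|1}$. *)

(* Minimal A-infinity algebras / modules over a field K,
   following Seidel's sign conventions, encoded without tensor products:
   a graded vector space is an lmodType with a family of homogeneous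
   projections, and the structure maps are multilinear maps on lists. *)
From HB Require Import structures.
From mathcomp Require Import all_boot all_order all_algebra.
Set Implicit Arguments. Unset Strict Implicit. Unset Printing Implicit Defensive.
Import Order.TTheory GRing.Theory Num.Theory.
Local Open Scope ring_scope.

Section AinfDefs.
Variable K : fieldType.

Definition grading (V : lmodType K) (pr : int -> V -> V) : Prop :=
  [/\ (forall n c (x y : V), pr n (c *: x + y) = c *: pr n x + pr n y),
      (forall m n (v : V), pr m (pr n v) = if m == n then pr n v else 0) &
      (forall v : V, exists s : seq int, uniq s /\ v = \sum_(n <- s) pr n v)].

Definition homog (V : lmodType K) (pr : int -> V -> V) (n : int) (v : V) : Prop :=
  pr n v = v.

Definition homlist (V : lmodType K) (pr : int -> V -> V) (s : seq V) (ns : seq int) :=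
  size s = size ns /\
  forall i, (i < size s)%N -> homog pr (nth 0 ns i) (nth 0 s i).

Definition sumdeg (ns : seq int) : int := \sum_(n <- ns) n.

Definition koszul (ns : seq int) : int := \sum_(n <- ns) (n - 1).

Definition ksign (z : int) : K := (-1) ^+ `|z|%N.

Definition multilinear (V W : lmodType K) (f : seq V -> W) : Prop :=
  forall (s : seq V) i c (x y : V), (i < size s)%N ->
    f (set_nth 0 s i (c *: x + y)) = c *: f (set_nth 0 s i x) + f (set_nth 0 s i y).

(* mu s with s = [:: x_1; ...; x_d] is mu^d(x_1, ..., x_d) (d >= 1),
   of degree 2 - d.  The A-infinity relations (Seidel's convention, the
   sign collecting the reduced degrees of the arguments to the right of
   the inner operation). *)
Definition is_minimal_Ainf_alg (A : lmodType K) (prA : int -> A -> A)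
    (mu : seq A -> A) : Prop :=
  [/\ grading prA, multilinear mu,
      (forall s ns, homlist prA s ns -> (0 < size s)%N ->
         homog prA (sumdeg ns + 2 - (size s)%:Z) (mu s)),
      (forall x, mu [:: x] = 0) &
      (forall s ns, homlist prA s ns ->
         \sum_(i < (size s).+1) \sum_(m < (size s).+1 | (0 < m)%N && (i + m <= size s)%N)
            ksign (koszul (drop (i + m) ns)) *:
              mu (take i s ++ mu (take m (drop i s)) :: drop (i + m) s) = 0)].

(* mP p s with s = [:: a_1; ...; a_d] is mu^{1|d}(p, a_1, ..., a_d),
   of degree 1 - d. *)
Definition is_minimal_Ainf_mod (A : lmodType K) (prA : int -> A -> A)
    (mu : seq A -> A) (P : lmodType K) (prP : int -> P -> P)
    (mP : P -> seq A -> P) : Prop :=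
  grading prP /\
  [/\ (forall s c (p q : P), mP (c *: p + q) s = c *: mP p s + mP q s),
      (forall p, multilinear (mP p)),
      (forall n p s ns, homog prP n p -> homlist prA s ns ->
         homog prP (n + sumdeg ns + 1 - (size s)%:Z) (mP p s)),
      (forall p, mP p [::] = 0) &
      (forall p s ns, homlist prA s ns ->
         \sum_(k < (size s).+1)
            ksign (koszul (drop k ns)) *: mP (mP p (take k s)) (drop k s)
         + \sum_(i < (size s).+1) \sum_(m < (size s).+1 | (0 < m)%N && (i + m <= size s)%N)
            ksign (koszul (drop (i + m) ns)) *:
              mP p (take i s ++ mu (take m (drop i s)) :: drop (i + m) s) = 0)].

Definition is_Ainf_submodule (A P : lmodType K) (prP : int -> P -> P)
    (mP : P -> seq A -> P) (S : P -> Prop) : Prop :=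
  [/\ S 0,
      (forall c p q, S p -> S q -> S (c *: p + q)),
      (forall n p, S p -> S (prP n p)) &
      (forall p s, S p -> S (mP p s))].

Definition deg_filt (P : lmodType K) (prP : int -> P -> P) (l : int) (p : P) : Prop :=
  forall k, l < k -> prP k p = 0.

(* Structure maps of the subquotient P^{(l)} / P^{(l-1)}, transported along
   the canonical isomorphism P^{(l)} / P^{(l-1)} ~ P^l (induced by prP l):
   mu^{1|d}([p], s) = [mu^{1|d}(p, s)] corresponds to prP l (mP p s). *)
Definition subquot_mu (A P : lmodType K) (prP : int -> P -> P)
    (mP : P -> seq A -> P) (l : int) (p : P) (s : seq A) : P :=
  prP l (mP p s).

Definition rep_A0 (A P : lmodType K) (mP : P -> seq A -> P) (p : P) (a : A) : P :=
  mP p [:: a].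

Definition module_of_rep (A P : lmodType K) (prA : int -> A -> A)
    (rho : P -> A -> P) (p : P) (s : seq A) : P :=
  if size s == 1%N then rho p (prA 0 (head 0 s)) else 0.

End AinfDefs.

(* A has no positive degrees and mu^{1|d} has degree 1 - d, so mu^{1|d} lowers the
   degree of its module argument by at least d - 1. Hence each P^{(l)} is preserved
   (mu^{1|0} = 0 by minimality), and for d >= 2 the maps send P^{(l)} into P^{(l-1)}; on
   P^{(l)} / P^{(l-1)} = P^l only the degree-preserving part of mu^{1|1} survives, which is
   the action of A^0. *)
From HB Require Import structures.
From mathcomp Require Import all_boot all_order all_algebra.
From mathcomp Require Import zify.
Set Implicit Arguments. Unset Strict Implicit. Unset Printing Implicit Defensive.
Import Order.TTheory GRing.Theory Num.Theory.
Local Open Scope ring_scope.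

Section LinearFun.
Variables (K : fieldType) (V W : lmodType K) (f : V -> W).
Hypothesis f_linear : linear f.

HB.instance Definition _ := GRing.isLinear.Build K V W *:%R f f_linear.

Lemma linear_fun0 : f 0 = 0.
Proof. exact: raddf0. Qed.

Lemma linear_fun_sum (I : Type) (r : seq I) (F : I -> V) :
  f (\sum_(i <- r) F i) = \sum_(i <- r) f (F i).
Proof. exact: raddf_sum. Qed.

End LinearFun.

Section Grading.
Variables (K : fieldType) (V : lmodType K) (pr : int -> V -> V).
Hypothesis gr : grading pr.

Lemma grading_linear n : linear (pr n).
Proof. by case: gr => + _ _; apply. Qed.

Lemma pr_idem m n v : pr m (pr n v) = if m == n then pr n v else 0.
Proof. by case: gr. Qed.

Lemma homog_pr n v : homog pr n (pr n v).
Proof. by rewrite /homog pr_idem eqxx. Qed.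

Lemma homog0 n : homog pr n 0.
Proof. exact: linear_fun0 (grading_linear n). Qed.

Lemma pr_homog_neq m k v : homog pr m v -> k != m -> pr k v = 0.
Proof. by move=> hv hkm; rewrite -hv pr_idem (negbTE hkm). Qed.

Lemma grading_sum_pr v : exists r : seq int, v = \sum_(n <- r) pr n v.
Proof. by case: gr => _ _ /(_ v) [r [_ e]]; exists r. Qed.

Lemma deg_filt_lin l c u v :
  deg_filt pr l u -> deg_filt pr l v -> deg_filt pr l (c *: u + v).
Proof. by move=> hu hv k hk; rewrite grading_linear hu // hv // scaler0 addr0. Qed.

Lemma deg_filtD l u v : deg_filt pr l u -> deg_filt pr l v -> deg_filt pr l (u + v).
Proof. by move=> hu hv; rewrite -[u]scale1r; apply: deg_filt_lin. Qed.

Lemma deg_filt0 l : deg_filt pr l 0.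
Proof. by move=> k _; apply: homog0. Qed.

Lemma deg_filt_pr l n v : deg_filt pr l v -> deg_filt pr l (pr n v).
Proof. by move=> hv k hk; rewrite pr_idem; case: eqP => // <-; apply: hv. Qed.

Lemma deg_filt_homog l m v : homog pr m v -> m <= l -> deg_filt pr l v.
Proof.
move=> hv hml k hlk; apply: pr_homog_neq hv _.
by apply: contraTneq hlk => ->; rewrite -leNgt.
Qed.

Lemma deg_filt_le l l' v : l <= l' -> deg_filt pr l v -> deg_filt pr l' v.
Proof. by move=> hll' hv k hk; apply: hv; apply: le_lt_trans hk. Qed.

Lemma deg_filt_exhaustive v : exists l, deg_filt pr l v.
Proof.
have [r ->] := grading_sum_pr v.
exists (\big[Num.max/0]_(n <- r) n) => k hk.
rewrite linear_fun_sum; last exact: grading_linear.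
rewrite big_seq big1 // => n nr; rewrite pr_idem.
case: eqP => // ekn; move: hk; rewrite ekn ltNge.
by rewrite (le_bigmax_seq _ _ _ _ nr).
Qed.

Lemma deg_filt_sum_pr l v : deg_filt pr l v ->
  exists r : seq int, all (<= l) r /\ v = \sum_(n <- r) pr n v.
Proof.
move=> hv; have [r er] := grading_sum_pr v.
exists (filter (<= l) r); split; first exact: filter_all.
rewrite big_filter {1}er (bigID (<= l)) /= [X in _ + X]big1 ?addr0 //.
by move=> n; rewrite -ltNge; apply: hv.
Qed.

End Grading.

Lemma pr_graded_map (K : fieldType) (V W : lmodType K)
    (prV : int -> V -> V) (prW : int -> W -> W) (g : V -> W) (d : int) :
  grading prV -> grading prW -> linear g ->
  (forall m x, homog prV m x -> homog prW (d + m) (g x)) ->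
  forall m v, prW (d + m) (g v) = g (prV m v).
Proof.
move=> gV gW g_lin g_deg m v; have [r ->] := grading_sum_pr gV v.
rewrite !linear_fun_sum //; try exact: grading_linear.
apply: eq_bigr => n _; rewrite pr_idem //; case: eqP => [-> | nm].
  by apply: g_deg; apply: homog_pr.
rewrite (linear_fun0 g_lin) (pr_homog_neq gW (g_deg _ _ (homog_pr gV n v))) //.
by apply/eqP => /addrI.
Qed.

Section Multilinear.
Variables (K : fieldType) (V W : lmodType K) (f : seq V -> W).
Hypothesis f_ml : multilinear f.

Lemma multilinear_head s : linear (fun x => f (x :: s)).
Proof. move=> c x y; exact: (@f_ml (0 :: s) 0%N c x y (ltn0Sn _)). Qed.

Lemma multilinear_cons x : multilinear (fun s => f (x :: s)).
Proof. move=> s i c y z hi; exact: (@f_ml (x :: s) i.+1 c y z hi). Qed.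

End Multilinear.

Lemma homlist_cons (K : fieldType) (V : lmodType K) (pr : int -> V -> V) x s n ns :
  homog pr n x -> homlist pr s ns -> homlist pr (x :: s) (n :: ns).
Proof. by move=> hx [hsz hs]; split=> [|[|i]] /=; [rewrite hsz | | apply: hs]. Qed.

Lemma sumdeg_le0 (ns : seq int) : all (<= 0) ns -> sumdeg ns <= 0.
Proof.
rewrite /sumdeg; elim: ns => [|n ns IH] /=; first by rewrite big_nil.
by rewrite big_cons => /andP[n_le0 /IH ns_le0]; rewrite -(addr0 (0 : int)) lerD.
Qed.

Lemma multilinear_homog_ind (K : fieldType) (V W : lmodType K) (pr : int -> V -> V)
    (D : pred int) (Q : W -> Prop) :
  grading pr -> (forall n v, ~~ D n -> pr n v = 0) ->
  Q 0 -> (forall u w, Q u -> Q w -> Q (u + w)) ->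
  forall (s : seq V) (f : seq V -> W), multilinear f ->
  (forall t ns, homlist pr t ns -> all D ns -> size t = size s -> Q (f t)) ->
  Q (f s).
Proof.
move=> gr suppD Q0 QD; elim=> [|x s IH] f f_ml hf; first exact: (hf [::] [::]).
have [r ->] := grading_sum_pr gr x.
rewrite (linear_fun_sum (multilinear_head f_ml s)).
apply: big_ind => // n _; have [Dn | nDn] := boolP (D n); last first.
  by rewrite suppD // (linear_fun0 (multilinear_head f_ml s)).
apply: (IH (fun t => f (pr n x :: t))); first exact: multilinear_cons.
move=> t ns ht hns hsz; apply: (hf _ (n :: ns)); rewrite /= ?hsz ?Dn //.
by apply: homlist_cons ht; apply: homog_pr.
Qed.

Definition graded_structure_maps (K : fieldType) (A P : lmodType K)
    (prA : int -> A -> A) (prP : int -> P -> P) (mP : P -> seq A -> P) : Prop :=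
  [/\ grading prP, (forall s, linear (mP^~ s)), (forall p, multilinear (mP p)) &
      (forall n p s ns, homog prP n p -> homlist prA s ns ->
         homog prP (n + sumdeg ns + 1 - (size s)%:Z) (mP p s))].

Section NonPositiveAction.
Variables (K : fieldType) (A P : lmodType K) (prA : int -> A -> A)
  (prP : int -> P -> P) (mP : P -> seq A -> P).
Hypotheses (gA : grading prA) (A_nonpos : forall (n : int) a, 0 < n -> prA n a = 0)
  (hmP : graded_structure_maps prA prP mP).

Let gP : grading prP. Proof. by case: hmP. Qed.
Let mP_linear s : linear (mP^~ s). Proof. by case: hmP. Qed.
Let mP_multilinear p : multilinear (mP p). Proof. by case: hmP. Qed.
Let mP_homog n p s ns : homog prP n p -> homlist prA s ns ->
  homog prP (n + sumdeg ns + 1 - (size s)%:Z) (mP p s).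
Proof. by case: hmP => _ _ _; apply. Qed.

Lemma mP_deg_filt l p s :
  deg_filt prP l p -> deg_filt prP (l + 1 - (size s)%:Z) (mP p s).
Proof.
move=> hp; have [r [rl ->]] := deg_filt_sum_pr gP hp.
rewrite (linear_fun_sum (mP_linear s)) big_seq.
apply: big_ind => [||n nr]; [exact: deg_filt0 | exact: deg_filtD |].
apply: (multilinear_homog_ind (D := <= 0)
          (Q := deg_filt prP (l + 1 - (size s)%:Z)) gA).
- by move=> m a; rewrite -ltNge; apply: A_nonpos.
- exact: deg_filt0.
- exact: deg_filtD.
- exact: mP_multilinear.
move=> t ns ht hns hsz; apply: (deg_filt_homog gP (mP_homog (homog_pr gP n p) ht)).
have := sumdeg_le0 hns; have := allP rl n nr; rewrite hsz /=; lia.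
Qed.

Lemma mP1_homog l m p a :
  homog prP l p -> homog prA m a -> homog prP (l + m) (mP p [:: a]).
Proof.
move=> hp ha; have a_homlist : homlist prA [:: a] [:: m] by split=> // -[|i].
by have := mP_homog hp a_homlist; rewrite /sumdeg big_seq1 addrK.
Qed.

Lemma pr_mP1 l p a : homog prP l p -> prP l (mP p [:: a]) = mP p [:: prA 0 a].
Proof.
move=> hp; rewrite -[l in prP l]addr0.
apply: (pr_graded_map gA gP (multilinear_head (mP_multilinear p) [::])).
by move=> m x; apply: mP1_homog.
Qed.

Lemma pr_mP_long l p s : homog prP l p -> (1 < size s)%N -> prP l (mP p s) = 0.
Proof.
move=> hp hs; have /(_ l) -> // := mP_deg_filt (s := s) (deg_filt_homog gP hp (lexx l)).
by move: hs; lia.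
Qed.

End NonPositiveAction.

Lemma Ainf_mod_graded_structure_maps (K : fieldType) (A P : lmodType K)
    (prA : int -> A -> A) (mu : seq A -> A) (prP : int -> P -> P)
    (mP : P -> seq A -> P) :
  is_minimal_Ainf_mod prA mu prP mP -> graded_structure_maps prA prP mP.
Proof. by case=> gP [mP_lin mP_ml mP_deg _ _]; split. Qed.

Theorem lemma4p5 (K : fieldType) (A : lmodType K) (prA : int -> A -> A)
    (mu : seq A -> A) (P : lmodType K) (prP : int -> P -> P)
    (mP : P -> seq A -> P) :
  is_minimal_Ainf_alg prA mu ->
  (forall (n : int) (a : A), 0 < n -> prA n a = 0) ->
  is_minimal_Ainf_mod prA mu prP mP ->
  (forall l : int,
     is_Ainf_submodule prP mP (deg_filt prP l) /\
     (forall p, deg_filt prP (l - 1) p -> deg_filt prP l p)) /\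
  (forall p : P, exists l : int, deg_filt prP l p) /\
  (forall l : int,
     (forall p a, homog prP l p -> homog prA 0 a -> homog prP l (rep_A0 mP p a)) /\
     (forall p s, homog prP l p ->
        subquot_mu prP mP l p s = module_of_rep prA (rep_A0 mP) p s)).
Proof.
case=> gA _ _ _ _ A_nonpos hmod.
have hmP := Ainf_mod_graded_structure_maps hmod.
have [gP [_ _ _ mP_nil _]] := hmod.
split; [move=> l; split; [split|] | split].
- exact: deg_filt0.
- exact: deg_filt_lin.
- exact: deg_filt_pr.
- move=> p [|a s] hp; first by rewrite mP_nil; apply: deg_filt0.
  have le_l : l + 1 - (size (a :: s))%:Z <= l by rewrite /=; lia.
  exact: deg_filt_le le_l (mP_deg_filt gA A_nonpos hmP hp).
- by move=> p; apply: deg_filt_le; rewrite gerDl.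
- exact: deg_filt_exhaustive.
move=> l; split=> [p a hp ha | p s hp].
  by have := mP1_homog hmP hp ha; rewrite addr0.
rewrite /subquot_mu /module_of_rep; case: s => [|a [|b s]] /=.
- by rewrite mP_nil; apply: homog0.
- by rewrite (pr_mP1 gA hmP a hp).
- by rewrite (pr_mP_long gA A_nonpos hmP hp).
Qed.
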